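(* Let $\mathsf{C}$ be a categorical model of type theory, $\Gamma$ an object and $\Gamma.\Delta$ a context extension of $\Gamma$ with dependent projection $p_\Delta\colon\Gamma.\Delta\to\Gamma$. Then the pullback functor $p_\Delta^*\colon(\mathsf{C}\twoheadrightarrow\Gamma)\to(\mathsf{C}\twoheadrightarrow\Gamma.\Delta)$ admits a right adjoint.
   Context: A contextual category is a small category $\mathsf{C}$ with grading $\mathrm{ob}\,\mathsf{C}=\coprod_n\mathrm{ob}_n\mathsf{C}$, unique terminal object $\diamond$ of degree $0$, maps $\mathrm{ft}\colon\mathrm{ob}_{n+1}\to\mathrm{ob}_n$, basic dependent projections $p_X\colon X\to\mathrm{ft}X$, and strictly functorial chosen pullbacks of $p_X$ along any map into $\mathrm{ft}X$. Dependent projections are composites of basic ones; a context extension of $\Gamma$ is an object $\Gamma.\Delta$ with a dependent projection $\Gamma.\Delta\to\Gamma$. A categorical model of type theory is a contextual category with $\Pi$-, $\Sigma$-, $\mathsf{Id}$-structures (as in the appendix of Kapulkin–Lumsdaine–Voevodsky), satisfying $\Pi$-$\eta$ and Functional Extensionality. $\mathsf{C}$ is a fibration category with fibrations the maps isomorphic to dependent projections (and weak equivalences the bi-invertible maps). For an object $\Gamma$, $\mathsf{C}\twoheadrightarrow\Gamma$ is the full subcategory of the slice $\mathsf{C}/\Gamma$ on fibrations into $\Gamma$; $p_\Delta^*$ is pullback along $p_\Delta$. *)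

(* Categories are encoded "one-sorted":
   a type of objects, a type of morphisms, dom/cod, identities and a total
   composition whose laws are required only on composable pairs.  This avoids
   transports along equalities of objects (needed because in a contextual
   category ft (f^* X) = dom f holds only propositionally). *)
Set Implicit Arguments.
Unset Strict Implicit.

Record Cat : Type := {
  Ob : Type;
  Mor : Type;
  dom : Mor -> Ob;
  cod : Mor -> Ob;
  idm : Ob -> Mor;
  comp : Mor -> Mor -> Mor;          (* comp g f = g o f *)
  dom_idm : forall X, dom (idm X) = X;
  cod_idm : forall X, cod (idm X) = X;
  dom_comp : forall g f, cod f = dom g -> dom (comp g f) = dom f;
  cod_comp : forall g f, cod f = dom g -> cod (comp g f) = cod g;
  comp_idl : forall f, comp (idm (cod f)) f = f;
  comp_idr : forall f, comp f (idm (dom f)) = f;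
  comp_assoc : forall h g f, cod f = dom g -> cod g = dom h ->
      comp h (comp g f) = comp (comp h g) f
}.

Notation "g ∘ f" := (comp g f) (at level 40, left associativity).

Definition hom {C : Cat} (X Y : Ob C) (f : Mor C) : Prop :=
  dom f = X /\ cod f = Y.

Definition is_terminal {C : Cat} (T : Ob C) : Prop :=
  forall X : Ob C, exists! f : Mor C, hom X T f.

Definition is_iso {C : Cat} (i : Mor C) : Prop :=
  exists k : Mor C, hom (cod i) (dom i) k /\ k ∘ i = idm (dom i) /\ i ∘ k = idm (cod i).

(* [is_pullback f g p1 p2]: the square
      P --p2--> B
      |p1       |g
      v         v
      A --f---> D      is a pullback square. *)
Definition is_pullback {C : Cat} (f g p1 p2 : Mor C) : Prop :=
  cod f = cod g /\ dom p1 = dom p2 /\ cod p1 = dom f /\ cod p2 = dom g /\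
  f ∘ p1 = g ∘ p2 /\
  forall a b : Mor C, dom a = dom b -> cod a = dom f -> cod b = dom g ->
    f ∘ a = g ∘ b ->
    exists! u : Mor C, hom (dom a) (dom p1) u /\ p1 ∘ u = a /\ p2 ∘ u = b.

Record CtxCat : Type := {
  cc :> Cat;
  deg : Ob cc -> nat;                       (* grading ob C = coprod_n ob_n C *)
  pt : Ob cc;
  deg_pt : deg pt = 0;
  deg0_pt : forall X, deg X = 0 -> X = pt;
  pt_terminal : is_terminal pt;
  ft : Ob cc -> Ob cc;
  deg_ft : forall X n, deg X = S n -> deg (ft X) = n;
  proj : Ob cc -> Mor cc;
  proj_hom : forall X, 0 < deg X -> hom X (ft X) (proj X);
  pb : Mor cc -> Ob cc -> Ob cc;
  qq : Mor cc -> Ob cc -> Mor cc;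
  pb_deg : forall f X, 0 < deg X -> cod f = ft X -> deg (pb f X) = S (deg (dom f));
  pb_ft : forall f X, 0 < deg X -> cod f = ft X -> ft (pb f X) = dom f;
  qq_hom : forall f X, 0 < deg X -> cod f = ft X -> hom (pb f X) X (qq f X);
  pb_square : forall f X, 0 < deg X -> cod f = ft X ->
      is_pullback (proj X) f (qq f X) (proj (pb f X));
  pb_id : forall X, 0 < deg X -> pb (idm (ft X)) X = X;
  qq_id : forall X, 0 < deg X -> qq (idm (ft X)) X = idm X;
  pb_comp : forall f g X, 0 < deg X -> cod f = ft X -> cod g = dom f ->
      pb (f ∘ g) X = pb g (pb f X);
  qq_comp : forall f g X, 0 < deg X -> cod f = ft X -> cod g = dom f ->
      qq (f ∘ g) X = qq f X ∘ qq g (pb f X)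
}.

Section CtxNotions.
Variable C : CtxCat.

(* s is a section of p_X, i.e. a term of type X in context ft X *)
Definition is_section (X : Ob C) (s : Mor C) : Prop :=
  0 < deg X /\ hom (ft X) X s /\ proj X ∘ s = idm (ft X).

Definition sec_reindex (f : Mor C) (X : Ob C) (s t : Mor C) : Prop :=
  cod f = ft X /\ is_section (pb f X) t /\ qq f X ∘ t = s ∘ f.

(* d : Gamma.A -> Gamma.A.p_A^*A is the diagonal (generic variable) *)
Definition is_diag (A : Ob C) (d : Mor C) : Prop :=
  is_section (pb (proj A) A) d /\ qq (proj A) A ∘ d = idm A.

Definition is_pairmap (X : Ob C) (a b m : Mor C) : Prop :=
  hom (ft X) (pb (proj X) X) m /\
  proj (pb (proj X) X) ∘ m = a /\ qq (proj X) X ∘ m = b.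

(* A is a type in context ft A, and B a type in context A *)
Definition ty2 (A B : Ob C) : Prop := 0 < deg A /\ 0 < deg B /\ ft B = A.

Fixpoint dproj (n : nat) (X : Ob C) : Mor C :=
  match n with
  | 0 => idm X
  | S n' => dproj n' (ft X) ∘ proj X
  end.

Fixpoint ftn (n : nat) (X : Ob C) : Ob C :=
  match n with
  | 0 => X
  | S n' => ftn n' (ft X)
  end.

Definition is_dep_proj (pi : Mor C) : Prop :=
  exists n X, n <= deg X /\ pi = dproj n X.

Definition is_fibration (f : Mor C) : Prop :=
  exists pi i j : Mor C, is_dep_proj pi /\ is_iso i /\ is_iso j /\
    hom (dom f) (dom pi) i /\ hom (cod f) (cod pi) j /\ pi ∘ i = j ∘ f.

(* Stated through universal arrows (Mac Lane IV.1, Thm 2):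
   for every object e : E ->> Delta there is an object r : R ->> Gamma together with
   (a pullback pi^* R and) a counit eps : pi^* R -> E over Delta, terminal among all
   arrows pi^* T -> E over Delta, T ranging over (C ->> Gamma).  The formulation
   quantifies over all pullback squares, hence is independent of a choice of pullbacks. *)
Definition pullback_has_right_adjoint (Gamma Delta : Ob C) (pi : Mor C) : Prop :=
  hom Delta Gamma pi /\
  forall e : Mor C, is_fibration e -> cod e = Delta ->
  exists (r px pr eps : Mor C),
    is_fibration r /\ cod r = Gamma /\
    is_pullback pi r px pr /\
    hom (dom px) (dom e) eps /\ e ∘ eps = px /\
    forall (t qx qt phi : Mor C),
      is_fibration t -> cod t = Gamma ->
      is_pullback pi t qx qt ->
      hom (dom qx) (dom e) phi -> e ∘ phi = qx ->
      exists! psi : Mor C,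
        hom (dom t) (dom r) psi /\ r ∘ psi = t /\
        forall w : Mor C, hom (dom qx) (dom px) w -> pr ∘ w = psi ∘ qt -> px ∘ w = qx ->
          eps ∘ w = phi.

End CtxNotions.

Record PiStr (C : CtxCat) : Type := {
  Pi : Ob C -> Ob C -> Ob C;
  lam : Ob C -> Ob C -> Mor C -> Mor C;
  app : Ob C -> Ob C -> Mor C -> Mor C -> Mor C;
  Pi_form : forall A B, ty2 A B -> 0 < deg (Pi A B) /\ ft (Pi A B) = ft A;
  lam_sec : forall A B b, ty2 A B -> is_section B b -> is_section (Pi A B) (lam A B b);
  app_sec : forall A B k a, ty2 A B -> is_section (Pi A B) k -> is_section A a ->
      is_section (pb a B) (app A B k a);
  Pi_beta : forall A B b a, ty2 A B -> is_section B b -> is_section A a ->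
      sec_reindex a B b (app A B (lam A B b) a);
  Pi_stab : forall A B f, ty2 A B -> cod f = ft A ->
      pb f (Pi A B) = Pi (pb f A) (pb (qq f A) B);
  lam_stab : forall A B b f b', ty2 A B -> is_section B b -> cod f = ft A ->
      sec_reindex (qq f A) B b b' ->
      sec_reindex f (Pi A B) (lam A B b) (lam (pb f A) (pb (qq f A) B) b');
  app_stab : forall A B k a f k' a', ty2 A B -> is_section (Pi A B) k ->
      is_section A a -> cod f = ft A ->
      sec_reindex f (Pi A B) k k' -> sec_reindex f A a a' ->
      sec_reindex f (pb a B) (app A B k a) (app (pb f A) (pb (qq f A) B) k' a')
}.

(* Pi-eta:  lambda x. k x = k *)
Definition Pi_eta (C : CtxCat) (P : PiStr C) : Prop :=
  forall A B k k' d, ty2 A B -> is_section (Pi P A B) k ->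
    sec_reindex (proj A) (Pi P A B) k k' -> is_diag A d ->
    lam P A B (app P (pb (proj A) A) (pb (qq (proj A) A) B) k' d) = k.

Record SigStr (C : CtxCat) : Type := {
  Sig : Ob C -> Ob C -> Ob C;
  pair : Ob C -> Ob C -> Mor C;
  split : Ob C -> Ob C -> Ob C -> Mor C -> Mor C;
  Sig_form : forall A B, ty2 A B -> 0 < deg (Sig A B) /\ ft (Sig A B) = ft A;
  pair_hom : forall A B, ty2 A B -> hom B (Sig A B) (pair A B) /\
      proj (Sig A B) ∘ pair A B = proj A ∘ proj B;
  split_sec : forall A B X d, ty2 A B -> 0 < deg X -> ft X = Sig A B ->
      is_section (pb (pair A B) X) d ->
      is_section X (split A B X d) /\ sec_reindex (pair A B) X (split A B X d) d;
  Sig_stab : forall A B f, ty2 A B -> cod f = ft A ->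
      pb f (Sig A B) = Sig (pb f A) (pb (qq f A) B);
  pair_stab : forall A B f, ty2 A B -> cod f = ft A ->
      qq f (Sig A B) ∘ pair (pb f A) (pb (qq f A) B) = pair A B ∘ qq (qq f A) B;
  split_stab : forall A B X d f d', ty2 A B -> 0 < deg X -> ft X = Sig A B ->
      is_section (pb (pair A B) X) d -> cod f = ft A ->
      sec_reindex (qq (qq f A) B) (pb (pair A B) X) d d' ->
      sec_reindex (qq f (Sig A B)) X (split A B X d)
        (split (pb f A) (pb (qq f A) B) (pb (qq f (Sig A B)) X) d')
}.

Record IdStr (C : CtxCat) : Type := {
  Id : Ob C -> Ob C;
  refl : Ob C -> Mor C;
  J : Ob C -> Ob C -> Mor C -> Mor C;
  Id_form : forall A, 0 < deg A -> 0 < deg (Id A) /\ ft (Id A) = pb (proj A) A;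
  refl_hom : forall A d, 0 < deg A -> is_diag A d ->
      hom A (Id A) (refl A) /\ proj (Id A) ∘ refl A = d;
  J_sec : forall A X d, 0 < deg A -> 0 < deg X -> ft X = Id A ->
      hom A X d -> proj X ∘ d = refl A ->
      is_section X (J A X d) /\ J A X d ∘ refl A = d;
  Id_stab : forall A f, 0 < deg A -> cod f = ft A ->
      pb (qq (qq f A) (pb (proj A) A)) (Id A) = Id (pb f A);
  refl_stab : forall A f, 0 < deg A -> cod f = ft A ->
      qq (qq (qq f A) (pb (proj A) A)) (Id A) ∘ refl (pb f A) = refl A ∘ qq f A;
  J_stab : forall A X d f d', 0 < deg A -> 0 < deg X -> ft X = Id A ->
      hom A X d -> proj X ∘ d = refl A -> cod f = ft A ->
      let g := qq (qq (qq f A) (pb (proj A) A)) (Id A) in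
      hom (pb f A) (pb g X) d' -> proj (pb g X) ∘ d' = refl (pb f A) ->
      qq g X ∘ d' = d ∘ qq f A ->
      sec_reindex g X (J A X d) (J (pb f A) (pb g X) d')
}.

(* Function extensionality: in every context, a homotopy
   h : Pi(x:A). Id_B(f x, g x) yields an identification Id_{Pi(A,B)}(f, g). *)
Definition FunExt (C : CtxCat) (P : PiStr C) (I : IdStr C) : Prop :=
  forall A B f g f1 g1 d u v m m' h,
    ty2 A B -> is_section (Pi P A B) f -> is_section (Pi P A B) g ->
    sec_reindex (proj A) (Pi P A B) f f1 -> sec_reindex (proj A) (Pi P A B) g g1 ->
    is_diag A d ->
    u = app P (pb (proj A) A) (pb (qq (proj A) A) B) f1 d ->
    v = app P (pb (proj A) A) (pb (qq (proj A) A) B) g1 d ->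
    is_pairmap B u v m' -> is_pairmap (Pi P A B) f g m ->
    is_section (Pi P A (pb m' (Id I B))) h ->
    exists s, is_section (pb m (Id I (Pi P A B))) s.

Record TTModel : Type := {
  tt_ctx :> CtxCat;
  tt_Pi : PiStr tt_ctx;
  tt_Sig : SigStr tt_ctx;
  tt_Id : IdStr tt_ctx;
  tt_eta : Pi_eta tt_Pi;
  tt_funext : FunExt tt_Pi tt_Id
}.

(* Right adjoints compose and the dependent projection [p_Delta] is a composite
   of basic projections, so it suffices to treat a single [p_A : Gamma.A -> Gamma];
   the adjoint is built pointwise, as a universal arrow, for every fibration.
   Up to isomorphism a fibration over [Gamma.A] is a tower [Gamma.A.B_1 ... B_m],
   and its image is the tower of dependent products obtained by induction on [m]:
   having found [R_k] with counit [eps_k : p_A^* R_k -> Gamma.A.B_1...B_k], the next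
   stage is [Pi (p_A^* R_k) (eps_k^* B_(k+1))] over [R_k].  The universal property
   of each such [Pi] is currying, which is a bijection because Pi-eta makes [lam]
   a bijection onto the sections of [Pi A B]. *)
From Stdlib Require Import Lia.
Set Implicit Arguments.
Unset Strict Implicit.

Lemma comp_idl_eq (C : Cat) (f : Mor C) Y : cod f = Y -> idm Y ∘ f = f.
Proof. intros <-; apply comp_idl. Qed.

Lemma comp_idr_eq (C : Cat) (f : Mor C) Y : dom f = Y -> f ∘ idm Y = f.
Proof. intros <-; apply comp_idr. Qed.

Lemma comp_assoc_rw (C : Cat) (x y z r : Mor C) :
  x ∘ y = z -> cod r = dom y -> cod y = dom x -> x ∘ (y ∘ r) = z ∘ r.
Proof. intros E H1 H2. rewrite comp_assoc by assumption. rewrite E. reflexivity. Qed.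

Section CtxAccessors.
Variable M : CtxCat.

Lemma dom_proj (X : Ob M) : 0 < deg X -> dom (proj X) = X.
Proof. intro H; apply (proj_hom H). Qed.

Lemma cod_proj (X : Ob M) : 0 < deg X -> cod (proj X) = ft X.
Proof. intro H; apply (proj_hom H). Qed.

Lemma dom_qq (f : Mor M) X : 0 < deg X -> cod f = ft X -> dom (qq f X) = pb f X.
Proof. intros H1 H2; apply (qq_hom H1 H2). Qed.

Lemma cod_qq (f : Mor M) X : 0 < deg X -> cod f = ft X -> cod (qq f X) = X.
Proof. intros H1 H2; apply (qq_hom H1 H2). Qed.

Lemma deg_pb_gt0 (f : Mor M) X : 0 < deg X -> cod f = ft X -> 0 < deg (pb f X).
Proof. intros H1 H2; rewrite pb_deg by assumption; lia. Qed.

End CtxAccessors.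

(* [domcod] closes the domain/codomain side conditions that every composition
   in this one-sorted encoding generates; [degpos] closes [0 < deg _]. *)
Ltac degpos := first [ assumption | lia | apply deg_pb_gt0; [degpos | domcod0] ]
with domcod0 := repeat first
  [ rewrite dom_idm | rewrite cod_idm
  | rewrite dom_comp by domcod0 | rewrite cod_comp by domcod0
  | rewrite dom_proj by degpos | rewrite cod_proj by degpos
  | rewrite dom_qq by (degpos || domcod0) | rewrite cod_qq by (degpos || domcod0)
  | rewrite pb_ft by (degpos || domcod0) ];
  first [ reflexivity | congruence ].

Ltac domcod_hyps := repeat match goal with
  | H : context[ft (pb ?f ?X)] |- _ => rewrite (@pb_ft _ f X) in H by (degpos || domcod0)
  | H : context[dom (qq ?f ?X)] |- _ => rewrite (@dom_qq _ f X) in H by (degpos || domcod0)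
  | H : context[cod (qq ?f ?X)] |- _ => rewrite (@cod_qq _ f X) in H by (degpos || domcod0)
  | H : context[dom (proj ?X)] |- _ => rewrite (@dom_proj _ X) in H by degpos
  | H : context[cod (proj ?X)] |- _ => rewrite (@cod_proj _ X) in H by degpos
  | H : context[dom (?g ∘ ?f)] |- _ => rewrite (@dom_comp _ g f) in H by domcod0
  | H : context[cod (?g ∘ ?f)] |- _ => rewrite (@cod_comp _ g f) in H by domcod0
  | H : context[dom (idm ?X)] |- _ => rewrite (@dom_idm _ X) in H
  | H : context[cod (idm ?X)] |- _ => rewrite (@cod_idm _ X) in H
  end.

Ltac domcod := first [ domcod0 | domcod_hyps; domcod0 ].

Ltac assoc_right := repeat (rewrite <- comp_assoc by domcod).

Section Pullbacks.
Variable C : Cat.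

Lemma hom_comp (X Y Z : Ob C) f g : hom X Y f -> hom Y Z g -> hom X Z (g ∘ f).
Proof. intros [H1 H2] [H3 H4]; split; domcod. Qed.

Lemma pullback_parts (f g p1 p2 : Mor C) : is_pullback f g p1 p2 ->
  cod f = cod g /\ dom p1 = dom p2 /\ cod p1 = dom f /\ cod p2 = dom g /\ f ∘ p1 = g ∘ p2.
Proof. intros (H1 & H2 & H3 & H4 & H5 & _). tauto. Qed.

Lemma pullback_map (f g p1 p2 a b : Mor C) : is_pullback f g p1 p2 ->
  dom a = dom b -> cod a = dom f -> cod b = dom g -> f ∘ a = g ∘ b ->
  exists u, hom (dom a) (dom p1) u /\ p1 ∘ u = a /\ p2 ∘ u = b.
Proof.
  intros (_ & _ & _ & _ & _ & HU) H1 H2 H3 E.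
  destruct (HU a b H1 H2 H3 E) as [u [Hu _]]. exists u; exact Hu.
Qed.

Lemma pullback_map_ext (f g p1 p2 : Mor C) : is_pullback f g p1 p2 ->
  forall u v, dom u = dom v -> cod u = dom p1 -> cod v = dom p1 ->
  p1 ∘ u = p1 ∘ v -> p2 ∘ u = p2 ∘ v -> u = v.
Proof.
  intros S u v Hduv Hcu Hcv E1 E2.
  pose proof (pullback_parts S) as (Hc & Hd & Hc1 & Hc2 & Hsq).
  destruct S as (_ & _ & _ & _ & _ & HU).
  destruct (HU (p1 ∘ u) (p2 ∘ u)) as [w [_ Huniq]]; try domcod.
  - rewrite !comp_assoc by domcod. rewrite Hsq. reflexivity.
  - rewrite <- (Huniq u), <- (Huniq v); repeat split; domcod.
Qed.

Lemma pullback_iso (f g p1 p2 q1 q2 : Mor C) :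
  is_pullback f g p1 p2 -> is_pullback f g q1 q2 ->
  exists i i', hom (dom q1) (dom p1) i /\ hom (dom p1) (dom q1) i' /\
    p1 ∘ i = q1 /\ p2 ∘ i = q2 /\ q1 ∘ i' = p1 /\ q2 ∘ i' = p2 /\
    i ∘ i' = idm (dom p1) /\ i' ∘ i = idm (dom q1).
Proof.
  intros Hp Hq.
  pose proof (pullback_parts Hp) as (Hc & Hd & Hc1 & Hc2 & Hsq).
  pose proof (pullback_parts Hq) as (Hc' & Hd' & Hc1' & Hc2' & Hsq').
  destruct (pullback_map Hp (a := q1) (b := q2)) as (i & [Hid Hic] & Ei1 & Ei2); try assumption.
  destruct (pullback_map Hq (a := p1) (b := p2)) as (i' & [Hi'd Hi'c] & Ei'1 & Ei'2); try assumption.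
  exists i, i'. repeat split; try assumption.
  - apply (pullback_map_ext Hp); try domcod.
    + rewrite comp_assoc by domcod. rewrite Ei1, Ei'1. symmetry; apply comp_idr.
    + rewrite comp_assoc by domcod. rewrite Ei2, Ei'2, Hd. symmetry; apply comp_idr.
  - apply (pullback_map_ext Hq); try domcod.
    + rewrite comp_assoc by domcod. rewrite Ei'1, Ei1. symmetry; apply comp_idr.
    + rewrite comp_assoc by domcod. rewrite Ei'2, Ei2, Hd'. symmetry; apply comp_idr.
Qed.

Lemma pullback_idm (Z : Ob C) (f : Mor C) : cod f = Z -> is_pullback (idm Z) f f (idm (dom f)).
Proof.
  intro Hf. do 4 (split; [domcod|]). split.
  { rewrite comp_idl_eq by domcod. symmetry; apply comp_idr. }
  intros x y Hxy Hx Hy E.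
  rewrite comp_idl_eq in E by domcod.
  exists y. split.
  - split; [split; domcod|split; [congruence|apply comp_idl_eq; domcod]].
  - intros y' ([Hd Hc] & E1 & E2). rewrite comp_idl_eq in E2 by domcod. congruence.
Qed.

Lemma pullback_paste (f g h p q a b : Mor C) : cod f = dom g ->
  is_pullback g h p q -> is_pullback f p a b -> is_pullback (g ∘ f) h a (q ∘ b).
Proof.
  intros Hfg S2 S1.
  pose proof (pullback_parts S2) as (H1 & H2 & H3 & H4 & E2).
  pose proof (pullback_parts S1) as (H1' & H2' & H3' & H4' & E1).
  do 4 (split; [domcod|]). split.
  { assoc_right. rewrite E1. rewrite !comp_assoc by domcod. rewrite E2. reflexivity. }
  intros x y Hxy Hx Hy E.
  rewrite dom_comp in Hx by domcod.
  destruct (pullback_map S2 (a := f ∘ x) (b := y)) as (v & [Hvd Hvc] & Ev1 & Ev2); try domcod.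
  { rewrite comp_assoc by domcod. exact E. }
  destruct (pullback_map S1 (a := x) (b := v)) as (z & [Hzd Hzc] & Ez1 & Ez2); try domcod.
  exists z. split.
  - split; [split; domcod|split; [assumption|]]. assoc_right. congruence.
  - intros z' ([Hz'd Hz'c] & Ez'1 & Ez'2).
    apply (pullback_map_ext S1); try domcod.
    apply (pullback_map_ext S2); try domcod.
    + rewrite !comp_assoc by domcod. rewrite <- E1. assoc_right.
      rewrite Ez1, Ez'1. reflexivity.
    + rewrite Ez2, Ev2. rewrite comp_assoc by domcod. symmetry; exact Ez'2.
Qed.

Lemma pullback_cancel (f g h qx qt c d : Mor C) : cod f = dom g ->
  is_pullback (g ∘ f) h qx qt -> is_pullback g h c d ->
  exists u, hom (dom qx) (dom c) u /\ c ∘ u = f ∘ qx /\ d ∘ u = qt /\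
    is_pullback f c qx u.
Proof.
  intros Hfg Sq S2.
  pose proof (pullback_parts S2) as (H1 & H2 & H3 & H4 & Es2).
  pose proof (pullback_parts Sq) as (H1' & H2' & H3' & H4' & Esq).
  rewrite dom_comp in H3' by domcod.
  destruct (pullback_map S2 (a := f ∘ qx) (b := qt)) as (u & [Hud Huc] & E1 & E2); try domcod.
  { rewrite comp_assoc by domcod. exact Esq. }
  exists u. split; [split; domcod|]. do 2 (split; [assumption|]).
  do 4 (split; [domcod|]). split; [congruence|].
  intros x y Hxy Hx Hy E.
  destruct (pullback_map Sq (a := x) (b := d ∘ y)) as (z & [Hzd Hzc] & Ez1 & Ez2); try domcod.
  { assoc_right. rewrite E. rewrite !comp_assoc by domcod. rewrite Es2. reflexivity. }
  assert (Euz : u ∘ z = y).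
  { apply (pullback_map_ext S2); try domcod.
    - rewrite comp_assoc by domcod. rewrite E1. assoc_right. rewrite Ez1. congruence.
    - rewrite comp_assoc by domcod. rewrite E2. exact Ez2. }
  exists z. split.
  - split; [split; domcod|split; assumption].
  - intros z' ([Hz'd Hz'c] & Ez'1 & Ez'2).
    apply (pullback_map_ext Sq); try domcod.
    rewrite Ez2, <- Ez'2, <- E2. rewrite comp_assoc by domcod. reflexivity.
Qed.

End Pullbacks.

Section UniversalArrows.
Variable C : Cat.

(* [eps ∘ pi^*(psi) = phi], where [pi^*(psi)] is the comparison map [w] from the
   pullback square [(qx, qt)] over [dom psi] to the square [(px, pr)] over [cod psi]. *)
Definition transposes (px pr eps qx qt psi phi : Mor C) : Prop :=
  forall w, hom (dom qx) (dom px) w -> pr ∘ w = psi ∘ qt -> px ∘ w = qx -> eps ∘ w = phi.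

(* [eps : pi^* r -> e] over [dom pi] is a universal arrow from [pi^*] to [e],
   [pi^* r] being realised by the pullback square [(px, pr)]; this is the
   formulation of [pullback_has_right_adjoint]. *)
Definition universal_arrow (pi e r px pr eps : Mor C) : Prop :=
  is_pullback pi r px pr /\ hom (dom px) (dom e) eps /\ e ∘ eps = px /\
  forall t qx qt phi, cod t = cod pi -> is_pullback pi t qx qt ->
    hom (dom qx) (dom e) phi -> e ∘ phi = qx ->
    exists! psi, hom (dom t) (dom r) psi /\ r ∘ psi = t /\ transposes px pr eps qx qt psi phi.

Lemma universal_arrow_idm (X : Ob C) (e : Mor C) : cod e = X ->
  universal_arrow (idm X) e e e (idm (dom e)) (idm (dom e)).
Proof.
  intro He.
  split; [apply pullback_idm; assumption|]. split; [split; domcod|]. split; [apply comp_idr|].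
  intros t qx qt phi Ht Sq [Hpd Hpc] Ep.
  assert (Ht' : cod t = X) by domcod.
  destruct (pullback_iso (pullback_idm Ht') Sq)
    as (i & i' & [Hid Hic] & [Hi'd Hi'c] & Ei1 & Ei2 & Ei'1 & Ei'2 & Eii' & Ei'i).
  pose proof (pullback_parts Sq) as (K1 & K2 & K3 & K4 & K5).
  rewrite comp_idl_eq in Ei2 by domcod.
  exists (phi ∘ i'). split.
  - split; [split; domcod|split].
    + rewrite comp_assoc by domcod. rewrite Ep. exact Ei'1.
    + intros w [Hwd Hwc] E1 E2. rewrite comp_idl_eq in E1 by domcod.
      rewrite comp_idl_eq by domcod.
      rewrite E1. assoc_right. rewrite <- Ei2, Ei'i. apply comp_idr_eq; domcod.
  - intros psi' ([Hpd' Hpc'] & Ep' & W').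
    assert (E3 : idm (dom e) ∘ (psi' ∘ qt) = phi).
    { apply W'; [split; domcod|rewrite comp_idl_eq by domcod; reflexivity|].
      rewrite comp_assoc by domcod. rewrite Ep', <- K5. apply comp_idl_eq; domcod. }
    rewrite comp_idl_eq in E3 by domcod. rewrite <- E3. assoc_right. rewrite Ei'2.
    apply comp_idr_eq; domcod.
Qed.

Lemma universal_arrow_iso (pi d e r px pr eps k k' : Mor C) :
  universal_arrow pi d r px pr eps ->
  hom (dom e) (dom d) k -> hom (dom d) (dom e) k' -> d ∘ k = e ->
  k ∘ k' = idm (dom d) -> k' ∘ k = idm (dom e) ->
  universal_arrow pi e r px pr (k' ∘ eps).
Proof.
  intros (S & [Hed Hec] & Ee & U) [Hkd Hkc] [Hk'd Hk'c] Edk Ekk' Ek'k.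
  pose proof (pullback_parts S) as (K1 & K2 & K3 & K4 & K5).
  split; [exact S|]. split; [split; domcod|]. split.
  { rewrite <- Edk. assoc_right. rewrite (comp_assoc_rw Ekk') by domcod.
    rewrite comp_idl_eq by domcod. exact Ee. }
  intros t qx qt phi Ht Sq [Hpd Hpc] Ep.
  destruct (U t qx qt (k ∘ phi) Ht Sq ltac:(split; domcod))
    as (psi & (Hpsi & Epsi & Wpsi) & Upsi).
  { rewrite comp_assoc by domcod. rewrite Edk. exact Ep. }
  exists psi. split.
  - split; [assumption|split; [assumption|]].
    intros w Hw E1 E2. pose proof (Wpsi w Hw E1 E2) as E3. destruct Hw.
    assoc_right. rewrite E3. rewrite comp_assoc by domcod. rewrite Ek'k.
    apply comp_idl_eq; domcod.
  - intros psi' (Hpsi' & Epsi' & Wpsi'). apply Upsi.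
    split; [assumption|split; [assumption|]].
    intros w Hw E1 E2. pose proof (Wpsi' w Hw E1 E2) as E3. destruct Hw.
    rewrite <- E3. assoc_right. rewrite (comp_assoc_rw Ekk') by domcod.
    symmetry; apply comp_idl_eq; domcod.
Qed.

Section CompositeUniversalArrow.
Variables pi1 pi2 r1 px1 pr1 eps1 r px2 pr2 eps2 a b w0 : Mor C.
Hypothesis S1 : is_pullback pi1 r1 px1 pr1.
Hypothesis S2 : is_pullback pi2 r px2 pr2.
Hypothesis Heps1 : dom eps1 = dom px1.
Hypothesis Heps2 : hom (dom px2) (dom r1) eps2.
Hypothesis Sab : is_pullback pi1 px2 a b.
Hypothesis Hw0 : hom (dom a) (dom px1) w0.
Hypothesis Ew01 : px1 ∘ w0 = a.
Hypothesis Ew02 : pr1 ∘ w0 = eps2 ∘ b.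

(* The counit of the composite adjunction is [eps1 ∘ w0 = eps1 ∘ pi1^*(eps2)];
   the next two lemmas relate its transposes to those of [eps1] and [eps2]. *)
Lemma transposes_comp t c d u qx qt psi1 psi phi :
  is_pullback pi2 t c d -> hom (dom qx) (dom c) u -> c ∘ u = pi1 ∘ qx -> d ∘ u = qt ->
  hom (dom c) (dom r1) psi1 -> hom (dom t) (dom r) psi -> r ∘ psi = t ->
  transposes px2 pr2 eps2 c d psi psi1 -> transposes px1 pr1 eps1 qx u psi1 phi ->
  transposes a (pr2 ∘ b) (eps1 ∘ w0) qx qt psi phi.
Proof.
  intros Scd [Hud Huc] Eu1 Eu2 [Hpsi1d Hpsi1c] [Hpsid Hpsic] Epsi Wpsi Wpsi1.
  unfold transposes in *.
  pose proof (pullback_parts S1) as (K1 & K2 & K3 & K4 & K5).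
  pose proof (pullback_parts S2) as (L1 & L2 & L3 & L4 & L5).
  pose proof (pullback_parts Sab) as (M1 & M2 & M3 & M4 & M5).
  pose proof (pullback_parts Scd) as (O1 & O2 & O3 & O4 & O5).
  destruct Heps2 as [He2d He2c]. destruct Hw0 as [Hw0d Hw0c].
  intros w [Hwd Hwc] Ew1 Ew2.
  destruct (pullback_map S2 (a := c) (b := psi ∘ d)) as (w2 & [Hw2d Hw2c] & Ew21 & Ew22);
    try domcod.
  { rewrite comp_assoc by domcod. rewrite Epsi. exact O5. }
  assert (Ew2' : eps2 ∘ w2 = psi1) by (apply Wpsi; [split; domcod|exact Ew22|exact Ew21]).
  assert (Ebw : b ∘ w = w2 ∘ u).
  { apply (pullback_map_ext S2); try domcod.
    - rewrite comp_assoc, <- M5 by domcod. assoc_right. rewrite Ew2.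
      rewrite comp_assoc by domcod. rewrite Ew21. symmetry; exact Eu1.
    - rewrite comp_assoc by domcod. rewrite Ew1. rewrite comp_assoc by domcod.
      rewrite Ew22. assoc_right. rewrite Eu2. reflexivity. }
  assoc_right. apply Wpsi1.
  - split; domcod.
  - rewrite comp_assoc by domcod. rewrite Ew02. assoc_right. rewrite Ebw.
    rewrite comp_assoc by domcod. rewrite Ew2'. reflexivity.
  - rewrite comp_assoc by domcod. rewrite Ew01. exact Ew2.
Qed.

Lemma transposes_comp_inv t c d u qx qt psi w2 phi :
  cod qx = dom pi1 -> is_pullback pi2 t c d -> hom (dom qx) (dom c) u -> c ∘ u = pi1 ∘ qx -> d ∘ u = qt ->
  hom (dom t) (dom r) psi -> hom (dom c) (dom px2) w2 -> px2 ∘ w2 = c -> pr2 ∘ w2 = psi ∘ d ->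
  transposes a (pr2 ∘ b) (eps1 ∘ w0) qx qt psi phi ->
  transposes px1 pr1 eps1 qx u (eps2 ∘ w2) phi.
Proof.
  intros Hqx Scd [Hud Huc] Eu1 Eu2 [Hpsid Hpsic] [Hw2d Hw2c] Ew21 Ew22 Wpsi.
  unfold transposes in *.
  pose proof (pullback_parts S1) as (K1 & K2 & K3 & K4 & K5).
  pose proof (pullback_parts S2) as (L1 & L2 & L3 & L4 & L5).
  pose proof (pullback_parts Sab) as (M1 & M2 & M3 & M4 & M5).
  pose proof (pullback_parts Scd) as (O1 & O2 & O3 & O4 & O5).
  destruct Heps2 as [He2d He2c]. destruct Hw0 as [Hw0d Hw0c].
  intros w1 [Hw1d Hw1c] Ew11 Ew12.
  destruct (pullback_map Sab (a := qx) (b := w2 ∘ u)) as (w & [Hwd Hwc] & Ew1 & Ew2);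
    try domcod.
  { rewrite comp_assoc by domcod. rewrite Ew21. symmetry; exact Eu1. }
  assert (Hw0w : w0 ∘ w = w1).
  { apply (pullback_map_ext S1); try domcod.
    - rewrite comp_assoc by domcod. rewrite Ew01. congruence.
    - rewrite comp_assoc by domcod. rewrite Ew02. assoc_right. rewrite Ew2.
      rewrite comp_assoc by domcod. congruence. }
  rewrite <- Hw0w. rewrite comp_assoc by domcod.
  apply Wpsi; [split; domcod| |exact Ew1].
  assoc_right. rewrite Ew2. rewrite comp_assoc by domcod. rewrite Ew22.
  assoc_right. rewrite Eu2. reflexivity.
Qed.

End CompositeUniversalArrow.

Lemma universal_arrow_comp (pi1 pi2 e r1 px1 pr1 eps1 r px2 pr2 eps2 : Mor C) :
  cod pi1 = dom pi2 ->
  universal_arrow pi1 e r1 px1 pr1 eps1 -> universal_arrow pi2 r1 r px2 pr2 eps2 ->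
  (forall f, cod f = cod pi1 -> exists p1 p2, is_pullback pi1 f p1 p2) ->
  (forall f, cod f = cod pi2 -> exists p1 p2, is_pullback pi2 f p1 p2) ->
  exists px pr eps, universal_arrow (pi2 ∘ pi1) e r px pr eps.
Proof.
  intros H12 (S1 & He1 & Ee1 & U1) (S2 & He2 & Ee2 & U2) PB1 PB2.
  pose proof (pullback_parts S1) as (K1 & K2 & K3 & K4 & K5).
  pose proof (pullback_parts S2) as (L1 & L2 & L3 & L4 & L5).
  destruct He1 as [He1d He1c]. pose proof He2 as [He2d He2c].
  destruct (PB1 px2) as (a & b & Sab); [congruence|].
  pose proof (pullback_parts Sab) as (M1 & M2 & M3 & M4 & M5).
  destruct (pullback_map S1 (a := a) (b := eps2 ∘ b)) as (w0 & Hw0 & Ew01 & Ew02);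
    try domcod.
  { rewrite comp_assoc by domcod. rewrite Ee2. exact M5. }
  pose proof Hw0 as [Hw0d Hw0c].
  exists a, (pr2 ∘ b), (eps1 ∘ w0).
  split; [apply (pullback_paste (p := px2)); assumption|].
  split; [split; domcod|].
  split; [rewrite comp_assoc by domcod; rewrite Ee1; exact Ew01|].
  intros t qx qt phi Ht Sq [Hpd Hpc] Ep.
  pose proof (pullback_parts Sq) as (N1 & N2 & N3 & N4 & N5).
  assert (Hqx : cod qx = dom pi1) by domcod.
  destruct (PB2 t) as (c & d & Scd); [domcod|].
  pose proof (pullback_parts Scd) as (O1 & O2 & O3 & O4 & O5).
  destruct (pullback_cancel H12 Sq Scd) as (u & Hu & Eu1 & Eu2 & Squ).
  destruct (U1 c qx u phi ltac:(domcod) Squ ltac:(split; domcod) Ep)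
    as (psi1 & (Hpsi1 & Epsi1 & Wpsi1) & Upsi1).
  destruct (U2 t c d psi1 ltac:(domcod) Scd Hpsi1 Epsi1)
    as (psi & (Hpsi & Epsi & Wpsi) & Upsi).
  exists psi. split.
  - split; [assumption|split; [assumption|]].
    exact (transposes_comp S1 S2 He1d He2 Sab Hw0 Ew01 Ew02 Scd Hu Eu1 Eu2 Hpsi1 Hpsi Epsi
             Wpsi Wpsi1).
  - intros psi' (Hpsi' & Epsi' & Wpsi').
    apply Upsi. split; [exact Hpsi'|split; [exact Epsi'|]].
    intros w2 Hw2 Ew22 Ew21. pose proof Hw2 as [Hw2d Hw2c].
    symmetry. apply Upsi1.
    split; [split; domcod|split].
    + rewrite comp_assoc by domcod. rewrite Ee2. exact Ew21.
    + exact (transposes_comp_inv S1 S2 He1d He2 Sab Hw0 Ew01 Ew02 Hqx Scd Hu Eu1 Eu2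
               Hpsi' Hw2 Ew21 Ew22 Wpsi').
Qed.

End UniversalArrows.

Section CanonicalPullbacks.
Variable M : CtxCat.

Lemma qq_square (f : Mor M) X : 0 < deg X -> cod f = ft X ->
  proj X ∘ qq f X = f ∘ proj (pb f X).
Proof. intros H1 H2. apply (pb_square H1 H2). Qed.

Lemma pb_map_ex (f : Mor M) (X : Ob M) (a b : Mor M) :
  0 < deg X -> cod f = ft X -> dom a = dom b -> cod a = X -> cod b = dom f ->
  proj X ∘ a = f ∘ b ->
  exists u, hom (dom a) (pb f X) u /\ qq f X ∘ u = a /\ proj (pb f X) ∘ u = b.
Proof.
  intros H0 Hf Hab Ha Hb E.
  destruct (pullback_map (pb_square H0 Hf) (a := a) (b := b)) as (u & [Hu1 Hu2] & Hu3 & Hu4);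
    try domcod.
  exists u; repeat split; try assumption. rewrite Hu2; domcod.
Qed.

Lemma pb_map_ext (f : Mor M) (X : Ob M) (u v : Mor M) :
  0 < deg X -> cod f = ft X -> dom u = dom v -> cod u = pb f X -> cod v = pb f X ->
  qq f X ∘ u = qq f X ∘ v -> proj (pb f X) ∘ u = proj (pb f X) ∘ v -> u = v.
Proof.
  intros H0 Hf Hd Hu Hv E1 E2.
  apply (pullback_map_ext (pb_square H0 Hf)); try assumption; domcod.
Qed.

Lemma section_ext (f : Mor M) (X : Ob M) (s t : Mor M) :
  0 < deg X -> cod f = ft X -> is_section (pb f X) s -> is_section (pb f X) t ->
  qq f X ∘ s = qq f X ∘ t -> s = t.
Proof.
  intros H0 Hf (Hs0 & [Hs1 Hs2] & Hs3) (Ht0 & [Ht1 Ht2] & Ht3) E.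
  apply (pb_map_ext H0 Hf); congruence.
Qed.

Lemma section_of_map (f : Mor M) (X : Ob M) (g : Mor M) :
  0 < deg X -> cod f = ft X -> dom g = dom f -> cod g = X -> proj X ∘ g = f ->
  exists s, is_section (pb f X) s /\ qq f X ∘ s = g.
Proof.
  intros H0 Hf Hg1 Hg2 E.
  destruct (pb_map_ex (a := g) (b := idm (dom f)) H0 Hf) as [u [[Hu1 Hu2] [Hu3 Hu4]]];
    try domcod.
  { rewrite E. symmetry; apply comp_idr. }
  exists u; split; [|assumption].
  split; [degpos|]. split; [split; domcod|]. rewrite pb_ft by assumption. exact Hu4.
Qed.

Lemma reindex_ex (f : Mor M) (X : Ob M) (s : Mor M) :
  is_section X s -> cod f = ft X -> exists t, sec_reindex f X s t.
Proof.
  intros (H0 & [Hs1 Hs2] & Hs3) Hf.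
  destruct (section_of_map (g := s ∘ f) H0 Hf) as [t [Ht1 Ht2]]; try domcod.
  - rewrite comp_assoc, Hs3, <- Hf by domcod. apply comp_idl.
  - exists t; split; [exact Hf|split; assumption].
Qed.

Lemma reindex_unique (f : Mor M) (X : Ob M) (s t t' : Mor M) : 0 < deg X ->
  sec_reindex f X s t -> sec_reindex f X s t' -> t = t'.
Proof.
  intros H0 (Hf & Ht & E) (_ & Ht' & E').
  apply (section_ext H0 Hf Ht Ht'). congruence.
Qed.

Lemma diag_ex (A : Ob M) : 0 < deg A -> exists d, is_diag A d.
Proof.
  intro H0.
  destruct (section_of_map (f := proj A) (X := A) (g := idm A) H0) as [d [Hd1 Hd2]];
    try domcod.
  - apply comp_idr_eq; domcod.
  - exists d; split; assumption.
Qed.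

End CanonicalPullbacks.

Section CanonicalUniversalArrows.
Variable M : CtxCat.

(* The special case of [universal_arrow (proj A) e r ...] in which all
   pullbacks along [proj A] are the chosen ones. *)
Definition canonical_universal (A : Ob M) (e r eps : Mor M) : Prop :=
  cod r = ft A /\ hom (pb r A) (dom e) eps /\ e ∘ eps = qq r A /\
  forall t phi, cod t = ft A -> hom (pb t A) (dom e) phi -> e ∘ phi = qq t A ->
    exists! psi, (hom (dom t) (dom r) psi /\ r ∘ psi = t) /\ eps ∘ qq psi (pb r A) = phi.

Lemma qq_map_into_pb (A : Ob M) (r t psi qx qt i : Mor M) : 0 < deg A -> cod r = ft A ->
  hom (dom t) (dom r) psi -> r ∘ psi = t ->
  hom (dom qx) (pb t A) i -> qq t A ∘ i = qx -> proj (pb t A) ∘ i = qt ->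
  hom (dom qx) (pb r A) (qq psi (pb r A) ∘ i) /\
  proj (pb r A) ∘ (qq psi (pb r A) ∘ i) = psi ∘ qt /\
  qq r A ∘ (qq psi (pb r A) ∘ i) = qx.
Proof.
  intros HA Hr [Hpsd Hpsc] Epsi [Hid Hic] Ei1 Ei2.
  assert (Ht : cod t = ft A) by (rewrite <- Epsi; domcod).
  assert (Hpb : pb psi (pb r A) = pb t A).
  { rewrite <- pb_comp by domcod. rewrite Epsi. reflexivity. }
  split; [split; domcod|split].
  - rewrite comp_assoc by domcod. rewrite qq_square by (try degpos; domcod).
    rewrite Hpb. assoc_right. rewrite Ei2. reflexivity.
  - rewrite comp_assoc by domcod. rewrite <- qq_comp by (try degpos; domcod).
    rewrite Epsi. exact Ei1.
Qed.

Lemma canonical_universal_arrow (A : Ob M) (e r eps : Mor M) : 0 < deg A ->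
  canonical_universal A e r eps ->
  universal_arrow (proj A) e r (qq r A) (proj (pb r A)) eps.
Proof.
  intros HA (Hr & [Hed Hec] & Ee & U).
  split; [apply pb_square; assumption|].
  split; [split; domcod|].
  split; [assumption|].
  intros t qx qt phi Ht Sq [Hpd Hpc] Ep.
  assert (Ht' : cod t = ft A) by domcod.
  destruct (pullback_iso (pb_square HA Ht') Sq)
    as (i & i' & Hi & [Hi'd Hi'c] & Ei1 & Ei2 & Ei'1 & Ei'2 & Eii' & Ei'i).
  pose proof Hi as [Hid Hic].
  pose proof Sq as (_ & Hqd & Hqxc & Hqtc & _).
  rewrite dom_qq in * by domcod.
  destruct (U t (phi ∘ i') Ht') as (psi & [[[Hpsd Hpsc] Epsi] Eeps] & Ue); try domcod.
  { split; domcod. }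
  { rewrite comp_assoc by domcod. rewrite Ep. exact Ei'1. }
  assert (pb psi (pb r A) = pb t A)
    by (rewrite <- pb_comp by domcod; rewrite Epsi; reflexivity).
  exists psi. split.
  - split; [split; assumption|split; [assumption|]].
    intros w [Hwd Hwc] Hw2 Hw3.
    destruct (qq_map_into_pb HA Hr (conj Hpsd Hpsc) Epsi Hi Ei1 Ei2)
      as ([Hvd Hvc] & Hv2 & Hv3).
    assert (w = qq psi (pb r A) ∘ i) as -> by (apply (pb_map_ext HA Hr); domcod).
    rewrite comp_assoc by domcod. rewrite Eeps. assoc_right. rewrite Ei'i.
    apply comp_idr_eq; domcod.
  - intros psi2 (Hps2 & Eps2 & Hall).
    destruct (qq_map_into_pb HA Hr Hps2 Eps2 Hi Ei1 Ei2) as (Hv1 & Hv2 & Hv3).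
    assert (E2 : eps ∘ (qq psi2 (pb r A) ∘ i) = phi)
      by (apply Hall; [rewrite dom_qq by domcod; exact Hv1|exact Hv2|exact Hv3]).
    destruct Hps2 as [Hps2d Hps2c].
    apply Ue. split; [split; [split; assumption|assumption]|].
    assert (pb psi2 (pb r A) = pb t A)
      by (rewrite <- pb_comp by domcod; rewrite Eps2; reflexivity).
    rewrite <- E2. assoc_right. rewrite Eii', comp_idr_eq by domcod. reflexivity.
Qed.

End CanonicalUniversalArrows.

Section PiTypes.
Variable M : CtxCat.
Variable P : PiStr M.
Hypothesis eta : Pi_eta P.

Lemma ty2_pb (A B : Ob M) (f : Mor M) : ty2 A B -> cod f = ft A ->
  ty2 (pb f A) (pb (qq f A) B).
Proof. intros (HA & HB & HBA) Hf. repeat split; try degpos. domcod. Qed.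

Lemma lam_inj (A B : Ob M) b1 b2 : ty2 A B -> is_section B b1 -> is_section B b2 ->
  lam P A B b1 = lam P A B b2 -> b1 = b2.
Proof.
  intros HT Hb1 Hb2 E.
  pose proof HT as (HA & HB & HBA).
  destruct (diag_ex HA) as [d [Hd Hdq]].
  assert (Hq : cod (qq (proj A) A) = ft B) by domcod.
  assert (Hpa : cod (proj A) = ft A) by domcod.
  destruct (reindex_ex Hb1 Hq) as [b1' Hb1'].
  destruct (reindex_ex Hb2 Hq) as [b2' Hb2'].
  pose proof (lam_stab P HT Hb1 Hpa Hb1') as L1.
  pose proof (lam_stab P HT Hb2 Hpa Hb2') as L2.
  rewrite E in L1.
  assert (E' := reindex_unique (proj1 (Pi_form P HT)) L1 L2).
  pose proof (Pi_beta P (ty2_pb HT Hpa) (proj1 (proj2 Hb1')) Hd) as Be1.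
  pose proof (Pi_beta P (ty2_pb HT Hpa) (proj1 (proj2 Hb2')) Hd) as Be2.
  rewrite E' in Be1.
  set (a := app P _ _ _ d) in Be1, Be2.
  (* [b] is recovered from its weakening [b'] as [q(p_A, B) ∘ q(d, _) ∘ (b' d)]. *)
  assert (recover : forall b b', is_section B b -> sec_reindex (qq (proj A) A) B b b' ->
            sec_reindex d (pb (qq (proj A) A) B) b' a ->
            b = qq (qq (proj A) A) B ∘ (qq d (pb (qq (proj A) A) B) ∘ a)).
  { intros b b' (_ & [Hbd Hbc] & Hbp) (_ & (_ & [Hb'd Hb'c] & _) & Hb'q) (Hdc & _ & Ha).
    destruct Hd as (_ & [Hdd Hdc'] & _).
    rewrite Ha, comp_assoc, Hb'q by domcod. assoc_right. rewrite Hdq.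
    rewrite HBA in Hbd. rewrite <- Hbd. symmetry; apply comp_idr. }
  rewrite (recover b1 b1'), (recover b2 b2'); auto.
Qed.

Lemma lam_surj (A B : Ob M) k : ty2 A B -> is_section (Pi P A B) k ->
  exists b, is_section B b /\ lam P A B b = k.
Proof.
  intros HT Hk.
  pose proof HT as (HA & HB & HBA).
  destruct (diag_ex HA) as [d Hd].
  assert (Hpa : cod (proj A) = ft (Pi P A B)).
  { rewrite (proj2 (Pi_form P HT)). domcod. }
  destruct (reindex_ex Hk Hpa) as [k' Hk'].
  exists (app P (pb (proj A) A) (pb (qq (proj A) A) B) k' d).
  split; [|exact (eta HT Hk Hk' Hd)].
  assert (Hk2 : is_section (Pi P (pb (proj A) A) (pb (qq (proj A) A) B)) k').
  { destruct Hk' as (_ & H & _). rewrite (Pi_stab P HT) in H by domcod. exact H. }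
  pose proof (app_sec (p := P) (ty2_pb (f := proj A) HT ltac:(domcod)) Hk2 (proj1 Hd)) as H.
  destruct Hd as [Hds Hdq].
  rewrite <- pb_comp in H by (try degpos; destruct Hds as (_ & [? ?] & _); domcod).
  replace (idm A) with (idm (ft B)) in Hdq by congruence.
  rewrite Hdq, pb_id in H by assumption. exact H.
Qed.

Section Currying.
Variables A B : Ob M.
Hypothesis HT : ty2 A B.

(* [h : dom f -> Pi A B] over [f] is the currying of [g : f^*A -> B] over [q(f, A)]. *)
Definition is_curry (f g h : Mor M) : Prop :=
  cod f = ft A /\ exists b, is_section (pb (qq f A) B) b /\ qq (qq f A) B ∘ b = g /\
    h = qq f (Pi P A B) ∘ lam P (pb f A) (pb (qq f A) B) b.

Lemma curry_ex f g : cod f = ft A -> hom (pb f A) B g -> proj B ∘ g = qq f A ->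
  exists h, is_curry f g h.
Proof.
  pose proof HT as (HA & HB & HBA). intros Hf [Hg1 Hg2] E.
  destruct (section_of_map (f := qq f A) (X := B) (g := g) HB) as [b [Hb1 Hb2]]; try domcod.
  eexists. split; [assumption|]. exists b. split; [exact Hb1|split; [exact Hb2|reflexivity]].
Qed.

Lemma curry_hom f g h : is_curry f g h ->
  hom (dom f) (Pi P A B) h /\ proj (Pi P A B) ∘ h = f.
Proof.
  pose proof (Pi_form P HT) as [HP1 HP2].
  pose proof HT as (HA & HB & HBA).
  intros (Hf & b & Hb & Hg & ->).
  assert (Hf' : cod f = ft (Pi P A B)) by congruence.
  pose proof (lam_sec P (ty2_pb HT Hf) Hb) as Hl.
  rewrite <- (Pi_stab P HT Hf) in Hl.
  destruct Hl as (Hl0 & [Hl1 Hl2] & Hl3).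
  rewrite pb_ft in Hl1, Hl3 by assumption.
  split; [split; domcod|].
  rewrite comp_assoc, qq_square by (try assumption; domcod).
  assoc_right. rewrite Hl3. apply comp_idr.
Qed.

Lemma curry_unique f g h h' : is_curry f g h -> is_curry f g h' -> h = h'.
Proof.
  pose proof HT as (HA & HB & HBA).
  intros (Hf & b & Hb & Hg & ->) (_ & b' & Hb' & Hg' & ->).
  replace b' with b; [reflexivity|].
  apply (section_ext (f := qq f A) HB); try assumption; [domcod|congruence].
Qed.

Lemma uncurry_unique f g g' h : is_curry f g h -> is_curry f g' h -> g = g'.
Proof.
  pose proof (Pi_form P HT) as [HP1 HP2].
  intros (Hf & b & Hb & <- & E) (_ & b' & Hb' & <- & E').
  assert (Hf' : cod f = ft (Pi P A B)) by congruence.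
  pose proof (lam_sec P (ty2_pb HT Hf) Hb) as Hl.
  pose proof (lam_sec P (ty2_pb HT Hf) Hb') as Hl'.
  rewrite <- (Pi_stab P HT Hf) in Hl, Hl'.
  pose proof (section_ext HP1 Hf' Hl Hl' (eq_trans (eq_sym E) E')) as El.
  rewrite (lam_inj (ty2_pb HT Hf) Hb Hb' El). reflexivity.
Qed.

Lemma uncurry_ex f h : cod f = ft A -> hom (dom f) (Pi P A B) h -> proj (Pi P A B) ∘ h = f ->
  exists g, hom (pb f A) B g /\ proj B ∘ g = qq f A /\ is_curry f g h.
Proof.
  pose proof (Pi_form P HT) as [HP1 HP2].
  pose proof HT as (HA & HB & HBA).
  intros Hf [Hh1 Hh2] E.
  assert (Hf' : cod f = ft (Pi P A B)) by congruence.
  destruct (section_of_map (f := f) (X := Pi P A B) (g := h) HP1 Hf') as [s [Hs1 Hs2]];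
    try domcod.
  rewrite (Pi_stab P HT Hf) in Hs1.
  destruct (lam_surj (ty2_pb HT Hf) Hs1) as [b [Hb Hbs]].
  exists (qq (qq f A) B ∘ b).
  pose proof Hb as (Hb0 & [Hbd Hbc] & Hbp).
  split; [split; domcod|split].
  - rewrite comp_assoc, qq_square by (try degpos; domcod).
    assoc_right. rewrite Hbp, pb_ft by (try degpos; domcod).
    apply comp_idr_eq; domcod.
  - split; [assumption|]. exists b. do 2 (split; [assumption || reflexivity|]).
    rewrite Hbs. symmetry; assumption.
Qed.

Lemma curry_natural f g h u : is_curry f g h -> cod u = dom f ->
  is_curry (f ∘ u) (g ∘ qq u (pb f A)) (h ∘ u).
Proof.
  pose proof (Pi_form P HT) as [HP1 HP2].
  pose proof HT as (HA & HB & HBA).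
  intros (Hf & b & Hb & <- & ->) Hu.
  assert (Hf' : cod f = ft (Pi P A B)) by congruence.
  assert (Hu' : cod u = ft (pb f A)) by domcod.
  assert (Hq : cod (qq u (pb f A)) = ft (pb (qq f A) B)) by domcod.
  destruct (reindex_ex Hb Hq) as [b' Hb'].
  pose proof (lam_stab P (ty2_pb HT Hf) Hb Hu' Hb') as L.
  rewrite <- (Pi_stab P HT Hf) in L.
  split; [domcod|]. exists b'.
  rewrite qq_comp, pb_comp with (X := B) by (try degpos; domcod).
  destruct Hb' as (_ & Hb's & Hb'q).
  split; [exact Hb's|split].
  - rewrite qq_comp by (try degpos; domcod).
    destruct Hb's as (_ & [Hd Hc] & _). destruct Hb as (_ & [Hd0 Hc0] & _).
    assoc_right. rewrite Hb'q. reflexivity.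
  - destruct L as (_ & (_ & [Ld Lc] & _) & Lq).
    pose proof (lam_sec P (ty2_pb HT Hf) Hb) as Hl.
    rewrite <- (Pi_stab P HT Hf) in Hl. destruct Hl as (_ & [Hld Hlc] & _).
    rewrite pb_comp with (X := A), qq_comp with (X := Pi P A B) by (try degpos; domcod).
    rewrite <- (comp_assoc (h := qq f (Pi P A B)) (g := qq u (pb f (Pi P A B)))) by domcod.
    rewrite Lq. rewrite comp_assoc by domcod. reflexivity.
Qed.

End Currying.

Lemma Pi_canonical_universal (A B : Ob M) : ty2 A B ->
  exists ev, canonical_universal A (proj B) (proj (Pi P A B)) ev.
Proof.
  intro HT.
  pose proof (Pi_form P HT) as [HP1 HP2].
  pose proof HT as (HA & HB & HBA).
  assert (Hp : cod (proj (Pi P A B)) = ft A) by domcod.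
  destruct (uncurry_ex HT (h := idm (Pi P A B)) Hp) as (ev & Hev1 & Hev2 & Hev3).
  { split; domcod. }
  { apply comp_idr_eq; domcod. }
  exists ev. red. rewrite !dom_proj by assumption.
  split; [exact Hp|split; [exact Hev1|split; [exact Hev2|]]].
  intros f g Hf Hg1 Hg2.
  destruct (curry_ex HT Hf Hg1 Hg2) as [h Hh].
  pose proof (curry_hom HT Hh) as [[Hhd Hhc] Hhp].
  (* [ev] is the uncurrying of the identity, so by naturality [ev ∘ q(h, _)] uncurries [h]. *)
  assert (Hnat : forall h', hom (dom f) (Pi P A B) h' -> proj (Pi P A B) ∘ h' = f ->
            is_curry A B f (ev ∘ qq h' (pb (proj (Pi P A B)) A)) h').
  { intros h' [Hh'd Hh'c] Hh'p.
    pose proof (curry_natural HT Hev3 (u := h') ltac:(domcod)) as H5.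
    rewrite Hh'p, comp_idl_eq in H5 by domcod. exact H5. }
  exists h. split.
  - split; [split; [split; domcod|assumption]|].
    exact (uncurry_unique HT (Hnat h (conj Hhd Hhc) Hhp) Hh).
  - intros h' [[Hh' Hh'p] Hh'g].
    pose proof (Hnat h' Hh' Hh'p) as H5. rewrite Hh'g in H5.
    exact (curry_unique HT Hh H5).
Qed.

End PiTypes.

Section DependentProjections.
Variable M : CtxCat.

Lemma deg_ft_pred (X : Ob M) : 0 < deg X -> deg (ft X) = pred (deg X).
Proof. intro H. destruct (deg X) eqn:E; [lia|]. apply deg_ft; assumption. Qed.

Lemma dproj_hom m (Y : Ob M) : m <= deg Y -> hom Y (ftn m Y) (dproj m Y).
Proof.
  revert Y; induction m as [|m IH]; intros Y Hm; simpl.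
  - split; domcod.
  - assert (H0 : 0 < deg Y) by lia.
    apply hom_comp with (ft Y); [apply proj_hom; assumption|].
    apply IH. rewrite deg_ft_pred by assumption. lia.
Qed.

(* The iterated chosen pullback of the tower [Y -> ft Y -> ... -> ftn m Y]
   along [f], returned as its top object together with the top map [q]. *)
Fixpoint tower_pb (f : Mor M) (m : nat) (Y : Ob M) : Ob M * Mor M :=
  match m with
  | 0 => (dom f, f)
  | S m' => let q := snd (tower_pb f m' (ft Y)) in (pb q Y, qq q Y)
  end.

Lemma tower_pb_spec m : forall (Y : Ob M) f, m <= deg Y -> cod f = ftn m Y ->
  ftn m (fst (tower_pb f m Y)) = dom f /\ m <= deg (fst (tower_pb f m Y)) /\
  hom (fst (tower_pb f m Y)) Y (snd (tower_pb f m Y)) /\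
  is_pullback (dproj m Y) f (snd (tower_pb f m Y)) (dproj m (fst (tower_pb f m Y))).
Proof.
  induction m as [|m IH]; intros Y f Hm Hf.
  - simpl in *. split; [reflexivity|split; [lia|split; [split; domcod|]]].
    apply pullback_idm; assumption.
  - assert (H0 : 0 < deg Y) by lia.
    assert (Hm' : m <= deg (ft Y)) by (rewrite deg_ft_pred by assumption; lia).
    destruct (IH (ft Y) f Hm' Hf) as (E1 & D1 & [Hq1d Hq1c] & S1).
    cbn [tower_pb fst snd ftn dproj].
    set (q := snd (tower_pb f m (ft Y))) in *.
    set (Y1 := fst (tower_pb f m (ft Y))) in *.
    assert (Hft : ft (pb q Y) = Y1) by domcod.
    rewrite Hft.
    split; [assumption|].
    split.
    { pose proof (deg_ft_pred (deg_pb_gt0 H0 Hq1c)). pose proof (deg_pb_gt0 H0 Hq1c).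
      rewrite Hft in *. lia. }
    split; [split; domcod|].
    pose proof (dproj_hom Hm') as [Hpd Hpc].
    apply (pullback_paste (p := q)); [domcod|exact S1|].
    apply pb_square; assumption.
Qed.

Lemma dproj_pullback_ex k (Z : Ob M) : k <= deg Z ->
  forall f, cod f = cod (dproj k Z) -> exists p1 p2, is_pullback (dproj k Z) f p1 p2.
Proof.
  intros Hk f Hf. pose proof (dproj_hom Hk) as [_ Hc].
  destruct (tower_pb_spec Hk (f := f) ltac:(congruence)) as (_ & _ & _ & S).
  eexists; eexists; exact S.
Qed.

End DependentProjections.

Section UniversalArrowsForDependentProjections.
Variable M : CtxCat.
Variable P : PiStr M.
Hypothesis eta : Pi_eta P.

(* Extending [e1] by the type [Y] is matched by extending [r1] by the dependent
   product [Pi (r1^* A) (eps1^* Y)]. *)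
Lemma canonical_universal_extend (A Y : Ob M) (e1 r1 eps1 : Mor M) :
  0 < deg A -> 0 < deg Y -> dom e1 = ft Y -> canonical_universal A e1 r1 eps1 ->
  exists R eps, 0 < deg R /\ ft R = dom r1 /\
    canonical_universal A (e1 ∘ proj Y) (r1 ∘ proj R) eps.
Proof.
  intros HA HY He1 (Hr1 & [Hed Hec] & Ee1 & U1).
  assert (Hce : cod eps1 = ft Y) by congruence.
  assert (HT : ty2 (pb r1 A) (pb eps1 Y)) by (repeat split; try degpos; domcod).
  destruct (Pi_canonical_universal eta HT) as (ev & _ & [Hevd Hevc] & Eev & Uev).
  pose proof (Pi_form P HT) as [HR0 HRft].
  rewrite pb_ft in HRft by assumption.
  set (R := Pi P (pb r1 A) (pb eps1 Y)) in *.
  exists R, (qq eps1 Y ∘ ev). split; [assumption|split; [assumption|]].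
  assert (Hpr : cod (proj R) = dom r1) by domcod.
  red. rewrite pb_comp by assumption.
  split; [domcod|]. split; [split; domcod|]. split.
  { rewrite qq_comp by assumption. assoc_right.
    rewrite (comp_assoc_rw (qq_square HY Hce)) by domcod. assoc_right.
    rewrite Eev. rewrite comp_assoc by domcod. rewrite Ee1. reflexivity. }
  intros t phi Ht [Hpd Hpc] Ephi.
  assert (Hphi1 : hom (pb t A) (dom e1) (proj Y ∘ phi)) by (split; domcod).
  assert (Ephi1 : e1 ∘ (proj Y ∘ phi) = qq t A)
    by (rewrite comp_assoc by domcod; exact Ephi).
  destruct (U1 t (proj Y ∘ phi) Ht Hphi1 Ephi1)
    as (psi1 & [[[Hp1d Hp1c] Ep1] Eps1] & Up1).
  assert (Hpbt : pb psi1 (pb r1 A) = pb t A).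
  { rewrite <- pb_comp by (try degpos; domcod). rewrite Ep1. reflexivity. }
  destruct (pb_map_ex (f := eps1) (X := Y) (a := phi) (b := qq psi1 (pb r1 A)) HY Hce)
    as (g & [Hgd Hgc] & Eg1 & Eg2); try domcod.
  destruct (Uev psi1 g) as (h & [[[Hhd Hhc] Eh1] Eh2] & Uh); try domcod.
  { split; domcod. }
  exists h. split.
  - split; [split; [split; domcod|]|].
    + assoc_right. rewrite Eh1. exact Ep1.
    + assoc_right. rewrite Eh2. exact Eg1.
  - intros h' [[[Hh'd Hh'c] Eh'1] Eh'2].
    assert (Hpsi1' : proj R ∘ h' = psi1).
    { symmetry; apply Up1. split; [split; [split; domcod|]|].
      - rewrite comp_assoc by domcod. exact Eh'1.
      - rewrite qq_comp by (try degpos; domcod).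
        rewrite <- Eev, <- Eh'2. assoc_right.
        rewrite (comp_assoc_rw (eq_sym (qq_square HY Hce))) by domcod.
        assoc_right. reflexivity. }
    apply Uh. split; [split; [split; domcod|exact Hpsi1']|].
    apply (pb_map_ext HY Hce); try domcod.
    + rewrite dom_comp, dom_qq by (try degpos; domcod).
      rewrite <- pb_comp by (try degpos; domcod). rewrite Hpsi1', Hpbt. congruence.
    + rewrite comp_assoc by domcod. rewrite Eh'2. congruence.
    + rewrite Eg2. rewrite comp_assoc by domcod. rewrite Eev.
      rewrite <- qq_comp by (try degpos; domcod). rewrite Hpsi1'. reflexivity.
Qed.

Lemma canonical_universal_idm (A : Ob M) : 0 < deg A ->
  canonical_universal A (idm A) (idm (ft A)) (idm A).
Proof.
  intro HA. red. rewrite pb_id, qq_id by assumption.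
  split; [domcod|]. split; [split; domcod|]. split; [apply comp_idl_eq; domcod|].
  intros t phi Ht [Hp1 Hp2] Ep.
  rewrite comp_idl_eq in Ep by domcod. subst phi.
  exists t. split.
  - split; [split; [split; domcod|apply comp_idl_eq; domcod]|].
    apply comp_idl_eq; domcod.
  - intros psi [[[Hd Hc] H2] _]. rewrite comp_idl_eq in H2 by domcod. congruence.
Qed.

Lemma canonical_universal_dproj (A : Ob M) : 0 < deg A ->
  forall m (Y : Ob M), m <= deg Y -> ftn m Y = A ->
  exists R eps, m <= deg R /\ ftn m R = ft A /\
    canonical_universal A (dproj m Y) (dproj m R) eps.
Proof.
  intros HA m; induction m as [|m IH]; intros Y Hm HY.
  - simpl in HY |- *. subst Y. exists (ft A), (idm A).
    split; [lia|split; [reflexivity|exact (canonical_universal_idm HA)]].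
  - assert (H0 : 0 < deg Y) by lia.
    assert (Hm' : m <= deg (ft Y)) by (rewrite deg_ft_pred by assumption; lia).
    destruct (IH (ft Y) Hm' HY) as (R1 & eps1 & HR1m & HR1f & U1).
    pose proof (dproj_hom Hm') as [HYd _].
    pose proof (dproj_hom HR1m) as [HRd _].
    destruct (canonical_universal_extend HA H0 HYd U1) as (R & eps & HR0 & HRft & U).
    rewrite HRd in HRft.
    pose proof (deg_ft_pred HR0) as HRdeg. rewrite HRft in HRdeg.
    exists R, eps. cbn [ftn dproj]. rewrite HRft.
    split; [lia|split; [exact HR1f|exact U]].
Qed.

Lemma dproj_universal_arrow n : forall (X : Ob M), n <= deg X ->
  forall m (Y : Ob M), m <= deg Y -> ftn m Y = X ->
  exists (R : Ob M) k px pr eps, k <= deg R /\ ftn k R = ftn n X /\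
    universal_arrow (dproj n X) (dproj m Y) (dproj k R) px pr eps.
Proof.
  induction n as [|n IH]; intros X Hn m Y Hm HY.
  - pose proof (dproj_hom Hm) as [Hd Hc].
    exists Y, m, (dproj m Y), (idm (dom (dproj m Y))), (idm (dom (dproj m Y))).
    split; [assumption|split; [assumption|]].
    apply universal_arrow_idm. congruence.
  - assert (H0 : 0 < deg X) by lia.
    assert (Hn' : n <= deg (ft X)) by (rewrite deg_ft_pred by assumption; lia).
    destruct (canonical_universal_dproj H0 Hm HY) as (R1 & eps1 & HR1m & HR1f & U1).
    pose proof (canonical_universal_arrow H0 U1) as UA1.
    destruct (IH (ft X) Hn' m R1 HR1m HR1f) as (R & k & px2 & pr2 & eps2 & HRk & HRf & UA2).
    destruct (universal_arrow_comp (pi1 := proj X) (pi2 := dproj n (ft X))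
                ltac:(pose proof (dproj_hom Hn') as [? ?]; domcod) UA1 UA2)
      as (px & pr & eps & UA3).
    + intros f Hf. exists (qq f X), (proj (pb f X)). apply pb_square; [assumption|domcod].
    + apply dproj_pullback_ex; assumption.
    + exists R, k, px, pr, eps. split; [assumption|split; [exact HRf|exact UA3]].
Qed.

End UniversalArrowsForDependentProjections.

Section Fibrations.
Variable M : CtxCat.

Lemma is_iso_idm (X : Ob M) : is_iso (idm X).
Proof.
  exists (idm X). split; [split; domcod|].
  rewrite dom_idm, cod_idm, comp_idl_eq by domcod. split; reflexivity.
Qed.

Lemma dproj_is_fibration k (R : Ob M) : k <= deg R -> is_fibration (dproj k R).
Proof.
  intro Hk. pose proof (dproj_hom Hk) as [Hd Hc].
  exists (dproj k R), (idm (dom (dproj k R))), (idm (cod (dproj k R))).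
  split; [exists k, R; split; [assumption|reflexivity]|].
  do 2 (split; [apply is_iso_idm|]).
  split; [split; domcod|]. split; [split; domcod|].
  rewrite comp_idr_eq, comp_idl_eq by domcod. reflexivity.
Qed.

(* Pulling the tower of [pi] back along the base isomorphism [j] makes the
   isomorphism lie over the identity of [cod e]. *)
Lemma fibration_iso_dproj (e : Mor M) : is_fibration e ->
  exists m Y k k', m <= deg Y /\ ftn m Y = cod e /\
    hom (dom e) Y k /\ hom Y (dom e) k' /\ dproj m Y ∘ k = e /\
    k ∘ k' = idm Y /\ k' ∘ k = idm (dom e).
Proof.
  intros (pi & i & j & (m & Y & Hm & ->) & Hi & Hj & [Hid Hic] & [Hjd Hjc] & Ecomm).
  destruct Hi as (iv & [Hivd Hivc] & Ei1 & Ei2).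
  destruct Hj as (jv & [Hjvd Hjvc] & Ej1 & Ej2).
  pose proof (dproj_hom Hm) as [HYd HYc].
  destruct (tower_pb_spec Hm (f := j) ltac:(congruence)) as (HY1 & HY2 & [Hqd Hqc] & Sq).
  set (Y2 := fst (tower_pb j m Y)) in *.
  set (q := snd (tower_pb j m Y)) in *.
  pose proof (dproj_hom HY2) as [HY2d HY2c].
  pose proof (pullback_parts Sq) as (K1 & K2 & K3 & K4 & K5).
  destruct (pullback_map Sq (a := idm Y) (b := jv ∘ dproj m Y))
    as (q' & [Hq'd Hq'c] & Eq1 & Eq2); try domcod.
  { rewrite comp_assoc, Ej2, comp_idl_eq, comp_idr_eq by domcod. reflexivity. }
  assert (Eq3 : q' ∘ q = idm Y2).
  { apply (pullback_map_ext Sq); try domcod.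
    - rewrite comp_assoc, Eq1, comp_idl_eq, comp_idr_eq by domcod. reflexivity.
    - rewrite comp_assoc, Eq2 by domcod. assoc_right. rewrite K5.
      rewrite comp_assoc, Ej1, comp_idl_eq, comp_idr_eq by domcod. reflexivity. }
  exists m, Y2, (q' ∘ i), (iv ∘ q).
  split; [assumption|split; [domcod|]].
  split; [split; domcod|]. split; [split; domcod|]. split; [|split].
  - rewrite comp_assoc, Eq2 by domcod. assoc_right. rewrite Ecomm.
    rewrite comp_assoc, Ej1 by domcod. apply comp_idl_eq; domcod.
  - assoc_right. rewrite (comp_assoc_rw Ei2), comp_idl_eq, Eq3 by domcod. f_equal; domcod.
  - assoc_right. rewrite (comp_assoc_rw Eq1), comp_idl_eq, Ei1 by domcod. f_equal; domcod.
Qed.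

End Fibrations.

Unset Implicit Arguments.
Set Strict Implicit.

Theorem lemma5p5 (M : TTModel) (Gamma X : Ob M) (n : nat)
  (hn : n <= deg X) (hX : ftn n X = Gamma) :
  pullback_has_right_adjoint Gamma X (dproj n X).
Proof.
  pose proof (dproj_hom hn) as [HXd HXc].
  split; [split; congruence|].
  intros e He Hce.
  destruct (fibration_iso_dproj He)
    as (m & Y & k & k' & Hm & HY & Hk & Hk' & Ek & Ekk' & Ek'k).
  destruct (dproj_universal_arrow (@tt_eta M) hn Hm (eq_trans HY Hce))
    as (R & l & px & pr & eps & HRl & HRf & UA0).
  pose proof (dproj_hom Hm) as [HYd _].
  rewrite <- HYd in Hk, Hk', Ekk'.
  destruct (universal_arrow_iso UA0 Hk Hk' Ek Ekk' Ek'k) as (S & Heps & Eeps & U).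
  pose proof (dproj_hom HRl) as [_ HRc].
  exists (dproj l R), px, pr, (k' ∘ eps).
  split; [apply dproj_is_fibration; assumption|].
  split; [congruence|].
  do 3 (split; [assumption|]).
  intros t qx qt phi _ Ht. apply U. congruence.
Qed.
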